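(* Let $c,M\in\mathbb{N}$ with $c,M\ge1$, and let $B_{c,M}=(n_B)_{n\ge0}$ be the periodic sequence defined by $n_B=c$ if $n\ge1$ and $M\mid n$, and $n_B=1$ otherwise (in particular $0_B=1$). Then $B_{c,M}$ is a cobweb tiling sequence.
   Context: Notation: $n_F\equiv F_n$. A sequence $F=(n_F)_{n\ge0}$ of natural numbers with $0_F=1$ is cobweb-admissible iff every $F$-nomial coefficient $\binom{n}{k}_F=\frac{n_F(n-1)_F\cdots(n-k+1)_F}{1_F2_F\cdots k_F}$, $0\le k\le n$, is a nonnegative integer. The cobweb poset of $F$ has, for each $s\ge1$, a level $\Phi_s$ consisting of $s_F$ distinct vertices (levels pairwise disjoint), plus a root level $\Phi_0$ with one vertex; for $x\in\Phi_i$, $y\in\Phi_j$ one has $x<y$ iff $i<j$. For $1\le a\le b$, the layer $\langle\Phi_a\to\Phi_b\rangle$ is the subposet on $\Phi_a\cup\dots\cup\Phi_b$; it has $m=b-a+1$ levels and its maximal chains form the set $\Phi_a\times\dots\times\Phi_b$. For a permutation $\sigma$ of $\{1,\dots,m\}$, a block of type $\sigma P_m$ in this layer is the subposet induced on $V_a\cup\dots\cup V_b$ where $V_{a-1+i}\subseteq\Phi_{a-1+i}$ and $|V_{a-1+i}|=\sigma(i)_F$ for $i=1,\dots,m$; its maximal chains form the set $V_a\times\dots\times V_b$. A tiling of the layer is a finite family of such blocks ($\sigma$ may vary from block to block) whose sets $V_a\times\dots\times V_b$ partition $\Phi_a\times\dots\times\Phi_b$ (pairwise max-disjoint and covering all maximal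 chains). A cobweb tiling sequence is a cobweb-admissible sequence $F$ such that for all $1\le a\le b$ the layer $\langle\Phi_a\to\Phi_b\rangle$ admits a tiling by blocks of type $\sigma P_{b-a+1}$. *)

From mathcomp Require Import all_boot all_fingroup.
From Stdlib Require List.
Set Implicit Arguments. Unset Strict Implicit. Unset Printing Implicit Defensive.

Definition fnom_num (F : nat -> nat) (n k : nat) : nat := \prod_(i < k) F (n - i).
Definition fnom_den (F : nat -> nat) (k : nat) : nat := \prod_(i < k) F i.+1.

Definition cobweb_admissible (F : nat -> nat) : Prop :=
  F 0 = 1 /\
  forall n k, k <= n -> 0 < fnom_den F k /\ fnom_den F k %| fnom_num F n k.

(* Vertices of level s are represented by the naturals x < s_F.
   For the layer <Phi_a -> Phi_b>, with m = b - a + 1 levels, the level with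
   0-based index i : 'I_m is Phi_(a+i).
   A maximal chain of the layer is an element of Phi_a x ... x Phi_b,
   i.e. a function c : 'I_m -> nat with c i < (a+i)_F. *)
Definition max_chain (F : nat -> nat) (a m : nat) (c : 'I_m -> nat) : Prop :=
  forall i : 'I_m, c i < F (a + i).

(* A block: a permutation sigma of {1..m} (encoded as sigma' in 'S_m on
   {0..m-1}, with sigma(i+1) = sigma'(i) + 1) and, for each level, a subset
   V_(a+i) of Phi_(a+i), given as a duplicate-free list. *)
Record block (m : nat) := Block { bperm : 'S_m ; bsets : 'I_m -> seq nat }.

Definition block_ok (F : nat -> nat) (a m : nat) (B : block m) : Prop :=
  forall i : 'I_m,
    [/\ uniq (bsets B i),
        all (fun x => x < F (a + i)) (bsets B i) &
        size (bsets B i) = F (bperm B i).+1].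

Definition in_block (m : nat) (B : block m) (c : 'I_m -> nat) : bool :=
  [forall i : 'I_m, c i \in bsets B i].

Definition tiling (F : nat -> nat) (a m : nat) (T : seq (block m)) : Prop :=
  (forall B, Stdlib.Lists.List.In B T -> block_ok F a B) /\
  (forall c : 'I_m -> nat, max_chain F a c -> count (fun B => in_block B c) T = 1).

Definition cobweb_tiling_sequence (F : nat -> nat) : Prop :=
  cobweb_admissible F /\
  forall a b, 1 <= a -> a <= b -> exists T : seq (block (b - a + 1)), tiling F a T.

Definition Bcm (c M : nat) (n : nat) : nat :=
  if (0 < n) && (M %| n) then c else 1.

(* Writing B x = c ^ [0 < x and M | x], the F-nomial
   denominator 1_B ... k_B is c ^ (k %/ M) and the numerator
   n_B ... (n-k+1)_B is c ^ (n %/ M - (n-k) %/ M); since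
   k %/ M + (n-k) %/ M <= n %/ M the former divides the latter.

   We first prove a general criterion valid for any sequence F:
   if a permutation sigma of the m levels of the layer starting at level a
   is such that each block level size F(sigma(i)+1) is either 1 or the
   full level size F(a+i), then the layer is tiled by blocks of type
   sigma P_m: take the whole level where the size is F(a+i) and a single
   vertex elsewhere; the chains of the layer are then partitioned
   according to their vertices at the singleton levels.
   For B_{c,M} a rotation i |-> (i + d) mod m of the levels, with
   d+1 = a (mod M), satisfies this criterion: whenever M | sigma(i)+1 the
   rotation did not wrap around, hence M | a + i as well. *)
From mathcomp Require Import all_boot all_fingroup zify.
Set Implicit Arguments. Unset Strict Implicit. Unset Printing Implicit Defensive.

(* B_{c,M} as a power of c, turning F-nomial products into sums of exponents. *)
Lemma Bcm_exp c M x : Bcm c M x = c ^ ((0 < x) && (M %| x)).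
Proof. by rewrite /Bcm; case: ifP => _; rewrite ?expn1 ?expn0. Qed.

Lemma count_multiples_prefix M k : 0 < M ->
  \sum_(i < k) ((0 < i.+1) && (M %| i.+1)) = k %/ M.
Proof.
move=> M_gt0; elim: k => [|k IHk]; first by rewrite big_ord0 div0n.
by rewrite big_ord_recr /= IHk divnS // addnC.
Qed.

Lemma count_multiples_window M n k : 0 < M -> k <= n ->
  \sum_(i < k) ((0 < n - i) && (M %| n - i)) + (n - k) %/ M = n %/ M.
Proof.
move=> M_gt0; elim: k => [|k IHk] k_le_n; first by rewrite big_ord0 subn0.
rewrite big_ord_recr /= subn_gt0 k_le_n /= -addnA.
have -> : (M %| n - k) + (n - k.+1) %/ M = (n - k) %/ M.
  by rewrite -[in RHS](subnSK k_le_n) divnS // subnSK.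
exact/IHk/ltnW.
Qed.

(* The F-nomial coefficients of B_{c,M} are powers c^(e' - e) with e <= e'. *)
Lemma Bcm_admissible c M : 1 <= c -> 1 <= M -> cobweb_admissible (Bcm c M).
Proof.
move=> c_gt0 M_gt0; split=> // n k k_le_n; split.
  by apply: prodn_gt0 => i; rewrite /Bcm; case: ifP.
rewrite /fnom_den /fnom_num.
under eq_bigr => i _ do rewrite Bcm_exp.
under [X in _ %| X]eq_bigr => i _ do rewrite Bcm_exp.
rewrite -!expn_sum; apply: dvdn_exp2l.
have superadd : k %/ M + (n - k) %/ M <= n %/ M.
  by rewrite -[in X in _ <= X](subnKC k_le_n) divnD // leq_addr.
rewrite count_multiples_prefix // -(leq_add2r ((n - k) %/ M)).
by rewrite count_multiples_window.
Qed.

Lemma In_map_filter (A B : Type) (f : A -> B) (p : pred A) (s : seq A)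
    (Q : B -> Prop) :
  (forall x, p x -> Q (f x)) -> forall y, List.In y (map f (filter p s)) -> Q y.
Proof.
move=> fQ y; elim: s => [|x s IHs] //=.
case: ifP => px /=; last exact: IHs.
by case=> [<-|]; [apply: fQ | apply: IHs].
Qed.

Section CompatiblePermutationTiling.

Variables (F : nat -> nat) (a m : nat) (sigma : 'S_m).
Hypothesis sigma_compat :
  forall i : 'I_m, F (sigma i).+1 = 1 \/ F (sigma i).+1 = F (a + i).

Definition full_level (i : 'I_m) : bool := F (sigma i).+1 != 1.

(* Every vertex label in the layer is below this bound. *)
Definition level_bound : nat := \max_(i < m) F (a + i).

Definition tile_block (h : {ffun 'I_m -> 'I_level_bound.+1}) : block m :=
  Block sigma (fun i => if full_level i then iota 0 (F (a + i)) else [:: val (h i)]).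

(* Canonical labels of the tiles: h i is a vertex of Phi_(a+i) at singleton
   levels and 0 at full levels. *)
Definition tile_label (h : {ffun 'I_m -> 'I_level_bound.+1}) : bool :=
  [forall i, if full_level i then val (h i) == 0 else val (h i) < F (a + i)].

Definition compatible_tiling : seq (block m) :=
  [seq tile_block h | h <- enum {ffun 'I_m -> 'I_level_bound.+1} & tile_label h].

Lemma tile_block_ok h : tile_label h -> block_ok F a (tile_block h).
Proof.
move=> /forallP h_label i; have := h_label i; rewrite /tile_block /=.
case: ifP => [full_i _|single_i h_lt].
  rewrite iota_uniq size_iota; split=> //.
    by apply/allP => x; rewrite mem_iota.
  by case: (sigma_compat i) => // sigma_one; rewrite /full_level sigma_one in full_i.
by split; rewrite //= ?h_lt //; move/negbFE/eqP: single_i.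
Qed.

(* Each chain of the layer lies in the tile labelled by its values at the
   singleton levels, and in no other tile. *)
Lemma compatible_tiling_count ch :
  max_chain F a ch -> count (fun B => in_block B ch) compatible_tiling = 1.
Proof.
move=> ch_chain; rewrite count_map count_filter.
have ch_lt i : ch i < level_bound.+1.
  exact/ltnW/(leq_trans (ch_chain i) (leq_bigmax i)).
set h0 : {ffun 'I_m -> 'I_level_bound.+1} :=
  [ffun i => inord (if full_level i then 0 else ch i)].
rewrite (eq_count (a2 := pred1 h0)); last first.
  move=> h /=; apply/idP/eqP.
    case/andP=> /forallP ch_in /forallP h_label; apply/ffunP => i.
    rewrite ffunE; apply/val_inj.
    have := h_label i; have := ch_in i; rewrite /tile_block /=.
    case: ifP => _ /=; first by move=> _ /eqP ->; rewrite inordK.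
    by rewrite mem_seq1 => /eqP -> _; rewrite inordK.
  move=> ->; apply/andP; split; apply/forallP => i;
    rewrite /tile_block /= ffunE; case: ifP => full_i /=.
  - by rewrite mem_iota add0n ch_chain.
  - by rewrite full_i inordK ?ch_lt // inE.
  - by rewrite full_i inordK.
  - by rewrite full_i inordK ?ch_lt // ch_chain.
by rewrite count_uniq_mem ?enum_uniq ?mem_enum.
Qed.

Lemma compatible_tiling_is_tiling : tiling F a compatible_tiling.
Proof.
split; last exact: compatible_tiling_count.
exact: In_map_filter tile_block_ok.
Qed.

End CompatiblePermutationTiling.

Definition rot_fun m d (i : 'I_m) : 'I_m :=
  Ordinal (ltn_pmod (i + d) (leq_ltn_trans (leq0n i) (ltn_ord i))).

Lemma rot_fun_inj m d : injective (@rot_fun m d).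
Proof.
move=> i j /(congr1 val) /= /eqP; rewrite eqn_modDr !modn_small //.
by move/eqP/val_inj.
Qed.

Definition rot_perm m d : 'S_m := perm (@rot_fun_inj m d).

(* A rotation by d < M with d+1 = a (mod M) maps a level i to a multiple
   of M only if a + i is itself a multiple of M: either the rotation does
   not wrap around and preserves residues, or it wraps around and lands
   below d + 1 <= M. *)
Lemma rot_multiple_aligned M a m d i : 0 < M -> d < M -> d.+1 = a %[mod M] ->
  i < m -> M %| ((i + d) %% m).+1 -> M %| a + i.
Proof.
move=> M_gt0 d_lt residue i_lt.
case: (ltnP (i + d) m) => [no_wrap | wrap].
  rewrite modn_small // -addnS /dvdn => /eqP mult.
  by rewrite /dvdn addnC -modnDmr -residue modnDmr mult.
have small : (i + d) %% m < d.
  rewrite -(subnK wrap) modnDr; apply: leq_ltn_trans (leq_mod _ _) _; lia.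
move=> /(dvdn_leq (ltn0Sn _)); lia.
Qed.

Lemma Bcm_rotation_compatible c M a m : 1 <= M -> 0 < a ->
  let d := a.-1 %% M in
  forall i : 'I_m, Bcm c M (rot_perm m d i).+1 = 1 \/
                   Bcm c M (rot_perm m d i).+1 = Bcm c M (a + i).
Proof.
move=> M_gt0 a_gt0 d i; rewrite /rot_perm permE /=.
case full_i: (M %| ((i + d) %% m).+1); last by left; rewrite /Bcm full_i.
have d_residue : d.+1 = a %[mod M].
  by rewrite /d -addn1 modnDml addn1 prednK.
have aligned := rot_multiple_aligned M_gt0 (ltn_pmod _ M_gt0) d_residue
  (ltn_ord i) full_i.
by right; rewrite /Bcm full_i aligned addn_gt0 a_gt0.
Qed.

Theorem mainTheorem10 (c M : nat) (hc : 1 <= c) (hM : 1 <= M) :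
  cobweb_tiling_sequence (Bcm c M).
Proof.
split; first exact: Bcm_admissible.
move=> a b a_gt0 _.
exists (compatible_tiling (Bcm c M) a (rot_perm (b - a + 1) (a.-1 %% M))).
exact/compatible_tiling_is_tiling/Bcm_rotation_compatible.
Qed.
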